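(* Let $\mathbf{G}=(\mathcal{V},\mathcal{E})$ be a directed graph on $\mathcal{V}=\{1,\dots,m\}$, let $a>0$, let $x=(x_1,\dots,x_m)\in[0,a)^m$ be fixed, and let $\{r_{ij}\}_{(i,j)\in\mathcal{E}}$ be independent random variables, each uniform on $[0,ma)$. Define $t_i=\mathrm{mod}\big(\sum_{j:(j,i)\in\mathcal{E}} r_{ji}-\sum_{j:(i,j)\in\mathcal{E}} r_{ij},\,ma\big)$ and $\tilde{x}_i=\mathrm{mod}(x_i+t_i,ma)$. If the undirected graph $\bar{\mathbf{G}}$ is connected, then the perturbed inputs $(\tilde{x}_1,\dots,\tilde{x}_m)$ are uniformly distributed over $[0,ma)^m$ subject to the constraint $\mathrm{mod}\big(\sum_{i=1}^m\tilde{x}_i,ma\big)=\sum_{i=1}^m x_i$.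
   Context: $\bar{\mathbf{G}}$ is the undirected graph on $\mathcal{V}$ obtained from $\mathbf{G}$ by ignoring edge orientations. For $a'>0$ and real $y$, $\mathrm{mod}(y,a')=y-pa'$ where $p$ is the unique integer with $y-pa'\in[0,a')$. *)

From HB Require Import structures.
From mathcomp Require Import all_boot all_order all_algebra.
From mathcomp Require Import all_classical all_reals all_analysis.
Set Implicit Arguments. Unset Strict Implicit. Unset Printing Implicit Defensive.
Import Order.TTheory GRing.Theory Num.Theory.
Local Open Scope classical_set_scope.
Local Open Scope ring_scope.

Definition modr (R : realType) (a' y : R) : R :=
  y - (Num.floor (y / a'))%:~R * a'.

Definition undirected (m : nat) (E : rel 'I_m) : rel 'I_m :=
  fun u v => E u v || E v u.

Definition ugraph_connected (m : nat) (E : rel 'I_m) : Prop :=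
  forall u v : 'I_m, connect (undirected E) u v.

Definition tmask (R : realType) (m : nat) (E : rel 'I_m) (a : R)
    (r : 'I_m -> 'I_m -> R) (i : 'I_m) : R :=
  modr (m%:R * a) ((\sum_(j | E j i) r j i) - (\sum_(j | E i j) r i j)).

Definition xpert (R : realType) (m : nat) (E : rel 'I_m) (a : R)
    (x : 'I_m -> R) (r : 'I_m -> 'I_m -> R) (i : 'I_m) : R :=
  modr (m%:R * a) (x i + tmask E a r i).

(* Each r_ij enters t_j with sign + and t_i with sign -, so the t_i sum to 0 and
   mod(sum_i x~_i, m a) = sum_i x_i. For the joint law, leave out a vertex k and add
   the vertices of a set S not containing k one at a time. By connectivity some edge
   joins a vertex u of S to a vertex v outside S; among the x~_i with i in S, the
   variable on that edge occurs only in x~_u = mod(V +- r_uv, m a), while V and the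
   other x~_i are functions of the remaining edge variables, which are independent of
   r_uv. The uniform law on [0, m a) is invariant under y |-> mod(V +- y, m a), so
   x~_u is uniform and independent of the other x~_i. *)

From HB Require Import structures.
From mathcomp Require Import all_boot all_order all_algebra.
From mathcomp Require Import all_classical all_reals all_analysis.
From mathcomp Require Import measurable_realfun lra.
Import Order.TTheory GRing.Theory Num.Theory.
Local Open Scope classical_set_scope.
Local Open Scope ring_scope.
Set Implicit Arguments. Unset Strict Implicit. Unset Printing Implicit Defensive.

Lemma measurable_funT_preimage d d' (T1 : measurableType d) (T2 : measurableType d')
    (f : T1 -> T2) (A : set T2) :
  measurable_fun setT f -> measurable A -> measurable (f @^-1` A).
Proof. by move=> mf mA; rewrite -[X in measurable X]setTI; exact: mf. Qed.

Section modr.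
Context (R : realType) (c : R) (hc : 0 < c).

Lemma modr_itv y : 0 <= modr c y < c.
Proof.
rewrite /modr; have /andP[lefy ltyf] := floor_itv (y / c).
rewrite intrD in ltyf.
have yE : y = (y / c) * c by rewrite divfK // gt_eqF.
move: lefy ltyf; set q := y / c; set f := (Num.floor q)%:~R => lefy ltyf.
have ge0 : 0 <= (q - f) * c by rewrite mulr_ge0 // ?subr_ge0 // ltW.
have lt0 : (q - f - 1) * c < 0 by rewrite pmulr_llt0 //; lra.
rewrite !mulrBl mul1r in ge0 lt0; rewrite yE -/q; apply/andP; split; lra.
Qed.

Lemma modr_small y : 0 <= y < c -> modr c y = y.
Proof.
move=> /andP[y_ge0 y_ltc]; rewrite /modr (_ : Num.floor (y / c) = 0) ?mul0r ?subr0 //.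
apply: floor_def; rewrite add0r /= mulr0z; apply/andP; split.
  by rewrite divr_ge0 // ltW.
by rewrite ltr_pdivrMr // mul1r.
Qed.

Lemma modrDzM y (n : int) : modr c (y + n%:~R * c) = modr c y.
Proof.
rewrite /modr mulrDl mulfK ?gt_eqF // floorDrz ?intr_int //.
by rewrite intrKfloor intrD mulrDl; lra.
Qed.

Lemma modrDmr y z : modr c (y + modr c z) = modr c (y + z).
Proof.
have -> : y + modr c z = (y + z) + (- Num.floor (z / c))%:~R * c.
  by rewrite /modr intrN mulNr addrA.
by rewrite modrDzM.
Qed.

Lemma modrBr y : modr c (y - c) = modr c y.
Proof. by rewrite -[RHS](modrDzM y (-1)) mulrN1z mulN1r. Qed.

Lemma modr_summ (I : Type) (s : seq I) (f : I -> R) :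
  modr c (\sum_(i <- s) modr c (f i)) = modr c (\sum_(i <- s) f i).
Proof.
elim: s => [|i s IH]; first by rewrite !big_nil.
have modrDml y z : modr c (modr c y + z) = modr c (y + z).
  by rewrite addrC modrDmr addrC.
by rewrite !big_cons modrDml -modrDmr IH modrDmr.
Qed.

Lemma measurable_modr : measurable_fun [set: R] (modr c).
Proof.
rewrite /modr; apply: measurable_funB => //.
apply: nondecreasing_measurable => // u v le_uv.
rewrite ler_pM2r // ler_int; apply: le_floor.
by rewrite ler_pM2r // invr_gt0.
Qed.

End modr.

Section lebesgue_measure_invariance.
Context (R : realType).
Local Notation lambda := (@lebesgue_measure R).

Lemma lebesgue_measure_shift (t : R) (A : set R) : measurable A ->
  lambda ((fun u => t + u) @^-1` A) = lambda A.
Proof.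
move=> mA.
have -> : lambda ((fun u => t + u) @^-1` A) =
  pushforward lambda ((fun u => t + u) : _ -> measurableTypeR R) A by [].
apply/esym/lebesgue_measure_unique => //=; first exact: measurable_funD.
move=> _ _ [[a b] _ <-]; rewrite /pushforward.
have -> : (+%R t) @^-1` `]a, b]%classic = `](a - t), (b - t)]%classic.
  by apply/seteqP; split => u /=; rewrite !in_itv /= => /andP[? ?]; apply/andP; split; lra.
rewrite !lebesgue_measure_itv /= !lte_fin ltrD2r.
by case: ifP => // _; rewrite -!EFinD; congr (_%:E); lra.
Qed.

Lemma lebesgue_measure_reflect (t : R) (A : set R) : measurable A ->
  lambda ((fun u => t - u) @^-1` A) = lambda A.
Proof.
move=> mA; have mtA : measurable ((fun u => t + u) @^-1` A).
  by apply: measurable_funT_preimage => //; exact: measurable_funD.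
by rewrite -(lebesgue_measure_shift t mA) -(lebesgue_measureN mtA).
Qed.

Context (c : R) (hc : 0 < c).

Lemma uniform_probE (A : set R) : measurable A ->
  uniform_prob hc A = (c^-1%:E * lambda (A `&` `[0%R, c]))%E.
Proof.
move=> mA; rewrite /uniform_prob integral_uniform_pdf.
rewrite (eq_integral (fun=> (c - 0)^-1%:E)); last first.
  by move=> u; rewrite inE /= in_itv /= /uniform_pdf => -[_ ->].
by rewrite integral_cst ?subr0 //; exact: measurableI.
Qed.

Lemma lebesgue_measure_itvcc_co (A : set R) : measurable A ->
  lambda (A `&` `[0, c]) = lambda (A `&` `[0, c[).
Proof.
move=> mA.
have -> : A `&` `[0, c] = (A `&` `[0, c[) `|` (A `&` [set c]).
  apply/seteqP; split => u /=; rewrite !in_itv /=.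
    move=> [Au /andP[u_ge0 u_lec]]; have [eq_uc|ne_uc] := eqVneq u c; first by right.
    by left; split => //; rewrite u_ge0 lt_neqAle ne_uc.
  move=> [[Au /andP[u_ge0 u_ltc]]|[Au eq_uc]]; split => //.
    by rewrite u_ge0 ltW.
  by rewrite eq_uc lexx ltW.
apply: measureU0; [exact: measurableI|exact: measurableI|].
apply: (subset_measure0 (mu := lambda) (A := A `&` [set c]) (B := [set c])) => //.
  exact: measurableI.
exact: lebesgue_measure_set1.
Qed.

(* On [0, c[, u |-> modr c (v + u) is the translation by s := modr c v on [0, c - s[
   and the translation by s - c on [c - s, c[. *)
Lemma lebesgue_measure_modr_shift (v : R) (A : set R) : measurable A ->
  lambda ((fun u => modr c (v + u)) @^-1` A `&` `[0, c[) = lambda (A `&` `[0, c[).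
Proof.
move=> mA; set s := modr c v.
have /andP[s_ge0 s_ltc] : 0 <= s < c by exact: modr_itv.
have modr_vs u : modr c (v + u) = modr c (u + s) by rewrite (modrDmr hc) addrC.
have -> : (fun u => modr c (v + u)) @^-1` A `&` `[0, c[ =
    (fun u => s + u) @^-1` (A `&` `[s, c[) `|` (fun u => s - c + u) @^-1` (A `&` `[0, s[).
  apply/seteqP; split => u /=; rewrite !in_itv /= modr_vs.
    move=> [Au /andP[u_ge0 u_ltc]]; have [u_lt|u_ge] := ltP u (c - s).
      left; rewrite (modr_small hc) in Au; last by apply/andP; split; lra.
      by split; [rewrite addrC|apply/andP; split; lra].
    right; rewrite -(modrBr hc) (modr_small hc) in Au; last by apply/andP; split; lra.
    by split; [rewrite (_ : s - c + u = u + s - c) //; lra|apply/andP; split; lra].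
  move=> [[Au /andP[? ?]]|[Au /andP[? ?]]].
    rewrite (modr_small hc); last by apply/andP; split; lra.
    by split; [rewrite addrC|apply/andP; split; lra].
  rewrite -(modrBr hc) (modr_small hc); last by apply/andP; split; lra.
  by split; [rewrite (_ : u + s - c = s - c + u) //; lra|apply/andP; split; lra].
have mAI a b : measurable (A `&` `[a, b[) by exact: measurableI.
rewrite measureU; first last.
- apply/seteqP; split => u //=; rewrite !in_itv /=.
  by move=> -[[_ /andP[? ?]] [_ /andP[? ?]]]; lra.
- by apply: measurable_funT_preimage => //; exact: measurable_funD.
- by apply: measurable_funT_preimage => //; exact: measurable_funD.
rewrite /= !lebesgue_measure_shift //.
have -> : A `&` `[0, c[ = (A `&` `[s, c[) `|` (A `&` `[0, s[).
  apply/seteqP; split => u /=; rewrite !in_itv /=.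
    move=> [Au /andP[u_ge0 u_ltc]]; have [u_lts|u_ges] := ltP u s.
      by right; split => //; rewrite u_ge0.
    by left; split => //; rewrite u_ges.
  by move=> [[Au /andP[? ?]]|[Au /andP[? ?]]]; split => //; apply/andP; split; lra.
rewrite measureU //; [exact: mAI|exact: mAI|].
apply/seteqP; split => u //=; rewrite !in_itv /=.
by move=> -[[_ /andP[? ?]] [_ /andP[? ?]]]; lra.
Qed.

Lemma measurable_modrD (v : R) : measurable_fun setT (fun u : R => modr c (v + u)).
Proof. by apply: measurableT_comp; [exact: measurable_modr|exact: measurable_funD]. Qed.

Lemma measurable_modrB (v : R) : measurable_fun setT (fun u : R => modr c (v - u)).
Proof. by apply: measurableT_comp; [exact: measurable_modr|exact: measurable_funB]. Qed.

Lemma measurable_modrD2 : measurable_fun setT (fun p : R * R => modr c (p.1 + p.2)).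
Proof. by apply: measurableT_comp; [exact: measurable_modr|exact: measurable_funD]. Qed.

Lemma measurable_modrB2 : measurable_fun setT (fun p : R * R => modr c (p.1 - p.2)).
Proof. by apply: measurableT_comp; [exact: measurable_modr|exact: measurable_funB]. Qed.

Lemma uniform_prob_modrD (v : R) (A : set R) : measurable A ->
  uniform_prob hc ((fun u => modr c (v + u)) @^-1` A) = uniform_prob hc A.
Proof.
move=> mA; have mfA := measurable_funT_preimage (measurable_modrD v) mA.
rewrite !uniform_probE // !lebesgue_measure_itvcc_co //.
by rewrite lebesgue_measure_modr_shift.
Qed.

(* u |-> c - u maps [0, c] onto itself and turns modr c (v - .) into modr c (v + .). *)
Lemma uniform_prob_modrB (v : R) (A : set R) : measurable A ->
  uniform_prob hc ((fun u => modr c (v - u)) @^-1` A) = uniform_prob hc A.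
Proof.
move=> mA; have mfA := measurable_funT_preimage (measurable_modrD v) mA.
rewrite -(uniform_prob_modrD v mA) !uniform_probE //; last first.
  exact: measurable_funT_preimage (measurable_modrB v) mA.
rewrite -[in RHS](lebesgue_measure_reflect c); last exact: measurableI.
congr (_ * lambda _)%E; apply/seteqP; split => u /=; rewrite !in_itv /=.
  move=> [Au /andP[? ?]]; split; last by apply/andP; split; lra.
  by rewrite -(modrBr hc) (_ : v + (c - u) - c = v - u) //; lra.
move=> [Au /andP[? ?]]; split; last by apply/andP; split; lra.
by rewrite -(modrBr hc) (_ : v + (c - u) - c = v - u) // in Au; lra.
Qed.

End lebesgue_measure_invariance.

Lemma g_sigma_product_rule d (T : measurableType d) (R : realType)
    (mu : {finite_measure set T -> \bar R}) (G : set (set T)) (Y : set T) (p : R) :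
  0 <= p -> measurable Y -> G `<=` measurable -> setI_closed G -> G setT ->
  (forall X, G X -> mu (Y `&` X) = (p%:E * mu X)%E) ->
  forall X, <<s G >> X -> mu (Y `&` X) = (p%:E * mu X)%E.
Proof.
move=> p_ge0 mY Gm GI GT YG X GX.
have := @g_sigma_algebra_measure_unique _ _ _ G Gm (fun=> setT) (fun=> GT) _
  (mrestr mu mY) (mscale (NngNum p_ge0) mu) GI _ _ X GX.
rewrite /mrestr /mscale /= setIC; apply.
- by apply/seteqP; split => // w _; exists 0%N.
- by move=> Z GZ; rewrite /mrestr /mscale /= setIC YG.
- by move=> _; rewrite /mrestr setTI ltey_eq fin_num_measure.
Qed.

Section image_measure.
Context d d' (T : measurableType d) (T' : measurableType d') (R : realType).
Variables (mu : {finite_measure set T -> \bar R}) (f : T -> T').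
Hypothesis mf : measurable_fun setT f.

Definition image_measure := pushforward mu f.

Let image_measure0 : image_measure set0 = 0%E.
Proof. by rewrite /image_measure /pushforward preimage_set0 measure0. Qed.

Let image_measure_ge0 B : (0 <= image_measure B)%E.
Proof. exact: measure_ge0. Qed.

Let image_measure_sigma_additive : semi_sigma_additive image_measure.
Proof. by apply: measure_semi_sigma_additive; exact: mf. Qed.

HB.instance Definition _ := isMeasure.Build _ _ _ image_measure
  image_measure0 image_measure_ge0 image_measure_sigma_additive.

Let image_measure_fin : fin_num_fun image_measure.
Proof. by move=> B mB; apply: fin_num_measure; exact: measurable_funT_preimage. Qed.

HB.instance Definition _ := Measure_isFinite.Build _ _ _ image_measure
  image_measure_fin.

End image_measure.

Section invariant_composition.
Context d d1 d2 (T : measurableType d) (T1 : measurableType d1)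
  (T2 : measurableType d2) (R : realType).
Variables (mu : {finite_measure set T -> \bar R}) (nu : {finite_measure set T2 -> \bar R}).
Variables (V : T -> T1) (U : T -> T2) (phi : T1 -> T2 -> T2).
Hypotheses (mV : measurable_fun setT V) (mU : measurable_fun setT U).
Hypothesis mphi : measurable_fun setT (fun p : T1 * T2 => phi p.1 p.2).
Hypothesis phi_invariant : forall v A, measurable A -> nu (phi v @^-1` A) = nu A.
Hypothesis UV_indep : forall A B, measurable A -> measurable B ->
  mu (U @^-1` A `&` V @^-1` B) = (nu A * mu (V @^-1` B))%E.

Let mVU : measurable_fun setT (fun w => (V w, U w)).
Proof. exact: measurable_fun_pair. Qed.

Lemma invariant_composition A : measurable A ->
  mu ((fun w => phi (V w) (U w)) @^-1` A) = (nu A * mu setT)%E.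
Proof.
move=> mA; set S := (fun p : T1 * T2 => phi p.1 p.2) @^-1` A.
have mS : measurable S by exact: measurable_funT_preimage.
have law_rect A1 A2 : measurable A1 -> measurable A2 ->
    image_measure mu (fun w => (V w, U w)) (A1 `*` A2) =
    (image_measure mu V A1 * nu A2)%E.
  by move=> mA1 mA2; rewrite /image_measure /pushforward muleC -UV_indep // setIC.
(* the law of (V, U) under mu is (law of V) \x nu; every section of S has measure nu A *)
transitivity (image_measure mu (fun w => (V w, U w)) S); first by [].
rewrite -(product_measure_unique law_rect mS) /product_measure1 /=; last exact: mVU.
have xsectionS v : xsection S v = phi v @^-1` A.
  by apply/seteqP; split => u; rewrite /xsection /= inE.
under eq_integral => v _ do rewrite xsectionS phi_invariant //.
by rewrite integral_cst //= /image_measure /pushforward preimage_setT.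
Qed.

End invariant_composition.

Lemma connect_boundary_edge (T : finType) (e : rel T) (S : {set T}) x y :
  connect e x y -> x \in S -> y \notin S -> exists u v, [/\ u \in S, v \notin S & e u v].
Proof.
move=> /connectP[p e_p ->] {y}; elim: p x e_p => [|z p IH] x /=; first by move=> _ ->.
move=> /andP[e_xz e_p] Sx; case Sz: (z \in S); first exact: IH.
by exists x, z; rewrite Sz.
Qed.

Lemma measurable_sum_filter d (T : measurableType d) (R : realType) (I : finType)
    (D : set T) (p : pred I) (h : I -> T -> R) :
  (forall i, p i -> measurable_fun D (h i)) ->
  measurable_fun D (fun w => \sum_(i | p i) h i w).
Proof.
move=> mh; have -> : (fun w => \sum_(i | p i) h i w) =
    (fun w => \sum_i (if p i then h i w else 0)) by apply/funext => w; rewrite big_mkcond.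
by apply: measurable_sum => i; case pi: (p i); [exact: mh|exact: measurable_cst].
Qed.

Lemma sum_netflow_eq0 (R : realType) (m : nat) (E : rel 'I_m) (r : 'I_m -> 'I_m -> R) :
  \sum_i ((\sum_(j | E j i) r j i) - \sum_(j | E i j) r i j) = 0.
Proof. by rewrite sumrB (exchange_big_dep xpredT) //= subrr. Qed.

Lemma modr_sum_xpert (R : realType) (m : nat) (E : rel 'I_m) (a : R) (x : 'I_m -> R)
    (r : 'I_m -> 'I_m -> R) : (0 < m)%N -> 0 < m%:R * a ->
  (forall i, 0 <= x i < a) -> modr (m%:R * a) (\sum_i xpert E a x r i) = \sum_i x i.
Proof.
move=> m_gt0 hma hx.
rewrite /xpert modr_summ // big_split /= -modrDmr // /tmask modr_summ // sum_netflow_eq0.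
rewrite (modr_small hma (y := 0)) ?lexx // addr0.
apply: (modr_small hma); apply/andP; split.
  by apply: sumr_ge0 => i _; case/andP: (hx i).
rewrite (_ : m%:R * a = \sum_(i < m) a); last by rewrite sumr_const card_ord mulr_natl.
apply: ltr_sum; last by move=> i _; case/andP: (hx i).
by apply/hasP; exists (Ordinal m_gt0); rewrite ?mem_index_enum.
Qed.

Section masked_inputs.
Context d (T : measurableType d) (R : realType) (P : probability T R) (m : nat)
  (E : rel 'I_m) (a : R) (x : 'I_m -> R) (r : 'I_m -> 'I_m -> {RV P >-> R})
  (hma : 0 < m%:R * a).
Hypothesis hind : forall B : 'I_m -> 'I_m -> set R, (forall i j, measurable (B i j)) ->
  P (\bigcap_(e in [set e : 'I_m * 'I_m | E e.1 e.2]) (r e.1 e.2 @^-1` B e.1 e.2))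
  = (\prod_(e : 'I_m * 'I_m | E e.1 e.2) P (r e.1 e.2 @^-1` B e.1 e.2))%E.
Hypothesis hunif : forall i j, E i j -> forall A : set R, measurable A ->
  P (r i j @^-1` A) = uniform_prob hma A.
Local Notation c := (m%:R * a).
Local Notation Unif := (uniform_prob hma).

Definition other_edges (e0 : 'I_m * 'I_m) := [set f : 'I_m * 'I_m | E f.1 f.2 /\ f != e0].

Definition edge_cylinders e0 : set (set T) :=
  [set \bigcap_(f in other_edges e0) (r f.1 f.2 @^-1` B f.1 f.2) |
    B in [set B : 'I_m -> 'I_m -> set R | forall i j, measurable (B i j)]].

Lemma edge_cylinders_measurable e0 : edge_cylinders e0 `<=` measurable.
Proof.
move=> _ [B mB <-]; apply: fin_bigcap_measurable; first exact: finite_finset.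
by move=> f _; exact: measurable_funPTI.
Qed.

Lemma setI_closed_edge_cylinders e0 : setI_closed (edge_cylinders e0).
Proof.
move=> _ _ [B1 mB1 <-] [B2 mB2 <-].
exists (fun i j => B1 i j `&` B2 i j); first by move=> i j; exact: measurableI.
by rewrite -bigcapI.
Qed.

Lemma edge_cylindersT e0 : edge_cylinders e0 setT.
Proof. by exists (fun _ _ => setT) => //; apply/seteqP; split. Qed.

Lemma edge_cylinders_preimage e0 f A : other_edges e0 f -> measurable A ->
  edge_cylinders e0 (r f.1 f.2 @^-1` A).
Proof.
move=> e0f mA; exists (fun i j => if (i, j) == f then A else setT).
  by move=> i j; case: ifP.
apply/seteqP; split => w /=.
  by move=> /(_ f e0f); rewrite -surjective_pairing eqxx.
by move=> Aw g _; case: ifP => // /eqP; rewrite -surjective_pairing => ->.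
Qed.

Lemma edge_cylinders_indep e0 A X : E e0.1 e0.2 -> measurable A ->
  edge_cylinders e0 X -> P (r e0.1 e0.2 @^-1` A `&` X) = (Unif A * P X)%E.
Proof.
move=> e0E mA [B mB <-]; set Y := \bigcap_(f in other_edges e0) _.
(* [hind] for [B] with the entry at e0 replaced by [A], resp. by [setT] *)
pose upd Z i j := if (i, j) == e0 then Z else B i j.
have upd_split (Z : set R) :
    \bigcap_(e in [set e : 'I_m * 'I_m | E e.1 e.2]) (r e.1 e.2 @^-1` upd Z e.1 e.2) =
    r e0.1 e0.2 @^-1` Z `&` Y.
  rewrite /upd; apply/seteqP; split => w /=.
    move=> Zw; split; first by have := Zw e0 e0E; rewrite -surjective_pairing eqxx.
    by move=> f [Ef ne_fe0]; have := Zw f Ef; rewrite -surjective_pairing (negbTE ne_fe0).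
  move=> [Zw Bw] f Ef; rewrite -surjective_pairing; case: eqP => [->//|/eqP ne_fe0].
  exact: Bw.
have P_upd (Z : set R) : measurable Z -> P (r e0.1 e0.2 @^-1` Z `&` Y) =
    (P (r e0.1 e0.2 @^-1` Z) *
     \prod_(f | E f.1 f.2 && (f != e0)) P (r f.1 f.2 @^-1` B f.1 f.2))%E.
  move=> mZ; rewrite -upd_split hind; last by move=> i j; rewrite /upd; case: ifP.
  rewrite (bigD1 e0) //= /upd -surjective_pairing eqxx; congr (_ * _)%E.
  by apply: eq_bigr => f /andP[_ ne_fe0]; rewrite -surjective_pairing (negbTE ne_fe0).
rewrite P_upd // -(setTI Y) -(preimage_setT (r e0.1 e0.2)) P_upd //.
by rewrite preimage_setT probability_setT mul1e hunif.
Qed.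

Lemma edge_indep e0 A X : E e0.1 e0.2 -> measurable A ->
  <<s edge_cylinders e0 >> X -> P (r e0.1 e0.2 @^-1` A `&` X) = (Unif A * P X)%E.
Proof.
move=> e0E mA; have UAE : Unif A = (fine (Unif A))%:E by rewrite fineK // fin_num_measure.
rewrite UAE; apply: g_sigma_product_rule.
- by rewrite fine_ge0 // measure_ge0.
- exact: measurable_funPTI.
- exact: edge_cylinders_measurable.
- exact: setI_closed_edge_cylinders.
- exact: edge_cylindersT.
- by move=> Y cY; rewrite -UAE; exact: edge_cylinders_indep.
Qed.

Definition Tcyl e0 := g_sigma_algebraType (edge_cylinders e0).

Lemma sigma_edge_cylinders_measurable e0 : <<s edge_cylinders e0 >> `<=` measurable.
Proof.
by apply: smallest_sub; [exact: sigma_algebra_measurable|exact: edge_cylinders_measurable].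
Qed.

Lemma Tcyl_measurable_fun e0 (f : T -> R) :
  measurable_fun (setT : set (Tcyl e0)) f -> measurable_fun setT f.
Proof.
move=> mf _ A mA; rewrite setTI; apply: sigma_edge_cylinders_measurable.
by move: (mf measurableT A mA); rewrite setTI; apply.
Qed.

Lemma measurable_r_Tcyl e0 f : other_edges e0 f ->
  measurable_fun (setT : set (Tcyl e0)) (r f.1 f.2).
Proof.
move=> e0f _ A mA; rewrite setTI; apply: sub_sigma_algebra.
exact: edge_cylinders_preimage.
Qed.

Definition input_without e0 i (w : T) := x i +
  ((\sum_(j | E j i && ((j, i) != e0)) r j i w) -
    \sum_(j | E i j && ((i, j) != e0)) r i j w).

Lemma measurable_input_without e0 i :
  measurable_fun (setT : set (Tcyl e0)) (input_without e0 i).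
Proof.
apply: measurable_funD => //; apply: measurable_funB; apply: measurable_sum_filter.
  by move=> j /andP[Eji ne]; exact: (measurable_r_Tcyl (f := (j, i))).
by move=> j /andP[Eij ne]; exact: (measurable_r_Tcyl (f := (i, j))).
Qed.

Definition xt i (w : T) := xpert E a x (fun u v => r u v w) i.

Lemma xtE i w :
  xt i w = modr c (x i + ((\sum_(j | E j i) r j i w) - \sum_(j | E i j) r i j w)).
Proof. by rewrite /xt /xpert /tmask modrDmr. Qed.

Lemma xt_not_incident e0 i w : i != e0.1 -> i != e0.2 ->
  xt i w = modr c (input_without e0 i w).
Proof.
move=> ne1 ne2.
have inE j : (E j i && ((j, i) != e0)) = E j i.
  by rewrite andb_idr // => _; apply/eqP => ji_e0; rewrite -ji_e0 eqxx in ne2.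
have outE j : (E i j && ((i, j) != e0)) = E i j.
  by rewrite andb_idr // => _; apply/eqP => ij_e0; rewrite -ij_e0 eqxx in ne1.
by rewrite xtE /input_without (eq_bigl _ _ inE) (eq_bigl _ _ outE).
Qed.

Lemma xt_in_edge v u w : E v u -> u != v ->
  xt u w = modr c (input_without (v, u) u w + r v u w).
Proof.
move=> Evu ne_uv; rewrite xtE /input_without (bigD1 v) //=.
have inE j : (E j u && ((j, u) != (v, u))) = (E j u && (j != v)).
  by rewrite xpair_eqE eqxx andbT.
have outE j : (E u j && ((u, j) != (v, u))) = E u j.
  by rewrite xpair_eqE (negbTE ne_uv) /= andbT.
rewrite (eq_bigl _ _ inE) (eq_bigl _ _ outE); congr (modr c _); lra.
Qed.

Lemma xt_out_edge u v w : E u v -> u != v ->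
  xt u w = modr c (input_without (u, v) u w - r u v w).
Proof.
move=> Euv ne_uv; rewrite xtE /input_without [X in _ - X](bigD1 v) //=.
have inE j : (E j u && ((j, u) != (u, v))) = E j u.
  by rewrite xpair_eqE (negbTE ne_uv) andbF andbT.
have outE j : (E u j && ((u, j) != (u, v))) = (E u j && (j != v)).
  by rewrite xpair_eqE eqxx.
rewrite (eq_bigl _ _ inE) (eq_bigl _ _ outE); congr (modr c _); lra.
Qed.

Lemma measurable_xt_Tcyl e0 i : i != e0.1 -> i != e0.2 ->
  measurable_fun (setT : set (Tcyl e0)) (xt i).
Proof.
move=> ne1 ne2; rewrite (_ : xt i = modr c \o input_without e0 i); last first.
  by apply/funext => w; rewrite /= (xt_not_incident _ ne1 ne2).
by apply: measurableT_comp; [exact: measurable_modr|exact: measurable_input_without].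
Qed.

Definition xt_event (B : 'I_m -> set R) (S : {set 'I_m}) :=
  \bigcap_(i in [set i | i \in S]) (xt i @^-1` B i).

Lemma xt_event_step (B : 'I_m -> set R) (S : {set 'I_m}) u e0 (phi : R -> R -> R)
    (V : T -> R) : (forall i, measurable (B i)) -> u \in S -> E e0.1 e0.2 ->
  measurable_fun setT (fun p : R * R => phi p.1 p.2) ->
  (forall v A, measurable A -> Unif (phi v @^-1` A) = Unif A) ->
  measurable_fun (setT : set (Tcyl e0)) V ->
  (forall i, i \in S -> i != u -> measurable_fun (setT : set (Tcyl e0)) (xt i)) ->
  (forall w, xt u w = phi (V w) (r e0.1 e0.2 w)) ->
  P (xt_event B (S :\ u)) = (\prod_(i in S :\ u) Unif (B i))%E ->
  P (xt_event B S) = (\prod_(i in S) Unif (B i))%E.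
Proof.
move=> mB uS e0E mphi phi_inv mV mS xtuE IH.
set G := xt_event B (S :\ u).
have cylG : <<s edge_cylinders e0 >> G.
  apply: (@fin_bigcap_measurable _ (Tcyl e0)); first exact: finite_finset.
  move=> i; rewrite /= !inE => /andP[ne_iu iS].
  exact: measurable_funT_preimage (mS i iS ne_iu) (mB i).
have mG : measurable G := sigma_edge_cylinders_measurable cylG.
have -> : xt_event B S = (fun w => phi (V w) (r e0.1 e0.2 w)) @^-1` B u `&` G.
  apply/seteqP; split => w /=.
    move=> Sw; split; first by rewrite -xtuE; exact: Sw.
    by move=> i; rewrite /= !inE => /andP[_ iS]; exact: Sw.
  move=> [Bu Gw] i /= iS; have [->|ne_iu] := eqVneq i u; first by rewrite /= xtuE.
  by apply: Gw; rewrite /= !inE ne_iu iS.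
(* under P restricted to G, r_e0 is uniform and independent of V *)
rewrite -[LHS]/(mrestr P mG _) (invariant_composition (nu := Unif) _ _ mphi phi_inv).
- rewrite /= /mrestr setTI IH [RHS](bigD1 u) //=; congr (_ * _)%E.
  by apply: eq_bigl => i; rewrite !inE andbC.
- exact: Tcyl_measurable_fun mV.
- exact (measurable_funPT (r e0.1 e0.2)).
- move=> A B' mA mB'; rewrite /= /mrestr -setIA edge_indep //.
  apply: (@measurableI _ (Tcyl e0)) => //; exact: measurable_funT_preimage.
- exact: mB.
Qed.

Lemma xt_event_prod (B : 'I_m -> set R) k : ugraph_connected E ->
  (forall i, measurable (B i)) ->
  forall S : {set 'I_m}, k \notin S -> P (xt_event B S) = (\prod_(i in S) Unif (B i))%E.
Proof.
move=> hconn mB S; move: {2}#|S| (erefl #|S|) => n.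
elim: n S => [|n IH] S cardS kS.
  rewrite (cards0_eq cardS) big_set0 (_ : xt_event B _ = setT) ?probability_setT //.
  by apply/seteqP; split => // w _ i; rewrite /= inE.
have [u0 u0S] : exists u0, u0 \in S by apply/set0Pn; rewrite -card_gt0 cardS.
have [u [v [uS vS uv_edge]]] := connect_boundary_edge (hconn u0 k) u0S kS.
have ne_uv : u != v by apply: contraNneq vS => <-.
have IHu : P (xt_event B (S :\ u)) = (\prod_(i in S :\ u) Unif (B i))%E.
  apply: IH; last by rewrite inE negb_and kS orbT.
  by move: (cardsD1 u S); rewrite uS cardS add1n => -[].
have mxt e0 : e0.1 \notin S :\ u -> e0.2 \notin S :\ u -> forall i, i \in S -> i != u ->
    measurable_fun (setT : set (Tcyl e0)) (xt i).
  move=> e01 e02 i iS ne_iu; have iSu : i \in S :\ u by rewrite !inE ne_iu.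
  by apply: measurable_xt_Tcyl; [move: e01|move: e02]; apply: contraNneq => <-.
have vSu : v \notin S :\ u by rewrite inE negb_and vS orbT.
have uSu : u \notin S :\ u by rewrite !inE eqxx.
case/orP: uv_edge => [Euv|Evu].
- apply: (xt_event_step (u := u) (e0 := (u, v)) (phi := fun s y => modr c (s - y))
    (V := input_without (u, v) u)) IHu => //.
  + exact: measurable_modrB2.
  + by move=> w A mA; exact: uniform_prob_modrB.
  + exact: measurable_input_without.
  + exact: mxt.
  + by move=> w; rewrite (xt_out_edge _ Euv ne_uv).
- apply: (xt_event_step (u := u) (e0 := (v, u)) (phi := fun s y => modr c (s + y))
    (V := input_without (v, u) u)) IHu => //.
  + exact: measurable_modrD2.
  + by move=> w A mA; exact: uniform_prob_modrD.
  + exact: measurable_input_without.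
  + exact: mxt.
  + by move=> w; rewrite (xt_in_edge _ Evu ne_uv).
Qed.

End masked_inputs.

Theorem lemma2 (d : measure_display) (T : measurableType d) (R : realType)
    (P : probability T R) (m : nat) (E : rel 'I_m) (a : R)
    (x : 'I_m -> R) (r : 'I_m -> 'I_m -> {RV P >-> R})
    (hm : (0 < m)%N) (ha : 0 < a) (hma : 0 < m%:R * a)
    (hx : forall i, 0 <= x i < a)
    (* the r_ij, (i,j) in E, are mutually independent *)
    (hind : forall B : 'I_m -> 'I_m -> set R, (forall i j, measurable (B i j)) ->
       P (\bigcap_(e in [set e : 'I_m * 'I_m | E e.1 e.2]) (r e.1 e.2 @^-1` B e.1 e.2))
       = (\prod_(e : 'I_m * 'I_m | E e.1 e.2) P (r e.1 e.2 @^-1` B e.1 e.2))%E)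
    (* each r_ij, (i,j) in E, is uniform on [0, m a) *)
    (hunif : forall i j, E i j -> forall A : set R, measurable A ->
       P (r i j @^-1` A) = uniform_prob hma A)
    (hconn : ugraph_connected E) :
  let xt : 'I_m -> T -> R := fun i w => xpert E a x (fun u v => r u v w) i in
  (* the constraint mod(sum_i x~_i, m a) = sum_i x_i holds almost surely *)
  P [set w | modr (m%:R * a) (\sum_i xt i w) = \sum_i x i] = 1%E /\
  (* and, dropping any one coordinate k, the remaining m-1 perturbed inputs are
     i.i.d. uniform on [0, m a): i.e. (x~_i) is uniform on [0,ma)^m subject to
     the constraint *)
  (forall (k : 'I_m) (B : 'I_m -> set R), (forall i, measurable (B i)) ->
     P (\bigcap_(i in [set i | i != k]) (xt i @^-1` B i))
     = (\prod_(i | i != k) uniform_prob hma (B i))%E).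
Proof.
move=> xt; split.
  rewrite (_ : [set w | _] = setT) ?probability_setT //.
  by apply/seteqP; split => // w _; exact: modr_sum_xpert.
move=> k B mB.
have := xt_event_prod x hind hunif (k := k) hconn mB (S := [set i | i != k]%SET).
rewrite inE eqxx /xt_event => /(_ isT).
have -> : [set i | i \in [set i | i != k]%SET] = [set i | i != k] :> set 'I_m.
  by apply/seteqP; split => i /=; rewrite inE.
by move=> ->; apply: eq_bigl => i; rewrite inE.
Qed.
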